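(* Let $R$ be a unital associative ring and $$A=\begin{pmatrix}1&1&1\\1&a&b\\1&c&d\end{pmatrix}\in\widehat{\cal S},\qquad \Psi(A)=\begin{pmatrix}1&1&1\\1&a^+&b^+\\1&c^+&d^+\end{pmatrix}.$$ Then $$a^+=(d-c)^{-1}(db^{-1}-ca^{-1})(db^{-1}-1)^{-1}(d-1).$$
   Context: $R^*$: units of $R$. $M_3^*(R)$: invertible $3\times3$ matrices; $M_3^\star(R)$: matrices with all entries in $R^*$. $J_1(M)=M^{-1}$; $J_2(M)_{jk}=(M_{kj})^{-1}$; $J=J_2\circ J_1$. $\widehat M_3(R)$: matrices whose first row and column consist of $1$'s. For $A=\{a_{j,k}\}\in M_3^\star(R)$: $\Lambda^L(A)_{j,k}=a_{1,1}a_{j,1}^{-1}a_{j,k}a_{1,k}^{-1}$. $\Phi(A)=J_2(\Lambda^L(A^{-1}))$ and $\Psi=J_2\circ\Phi\circ J_2$. ${\cal S}=\{M\in M_3(R):$ all square submatrices of $M$ are invertible and $J_2(M)$ is invertible$\}$, $\widehat{\cal S}={\cal S}\cap\widehat M_3(R)$. *)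

From HB Require Import structures.
From mathcomp Require Import all_boot all_order all_algebra.
From Stdlib Require Import ClassicalEpsilon.
Set Implicit Arguments. Unset Strict Implicit. Unset Printing Implicit Defensive.
Import GRing.Theory.
Local Open Scope ring_scope.

Section Defs.
Variable R : unitRingType.

Definition mx_invertible n (M : 'M[R]_n) : Prop :=
  exists B : 'M[R]_n, M *m B = 1%:M /\ B *m M = 1%:M.

(* J_1(M) = M^{-1}: the two-sided inverse (unique), chosen classically;
   defaults to M when M is not invertible (never used there). *)
Definition mxinv n (M : 'M[R]_n) : 'M[R]_n :=
  match excluded_middle_informative (mx_invertible M) with
  | left h => proj1_sig (constructive_indefinite_description _ h)
  | right _ => M
  end.

Definition J2 n (M : 'M[R]_n) : 'M[R]_n := \matrix_(j, k) (M k j)^-1.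

Definition all_units n (M : 'M[R]_n) : Prop :=
  forall i j, M i j \is a GRing.unit.

(* Lambda^L(A)_{j,k} = a_{11} a_{j1}^{-1} a_{jk} a_{1k}^{-1} (1-based indices) *)
Definition LambdaL n (A : 'M[R]_n.+1) : 'M[R]_n.+1 :=
  \matrix_(j, k) (A 0 0 * (A j 0)^-1 * A j k * (A 0 k)^-1).

Definition Phi n (A : 'M[R]_n.+1) : 'M[R]_n.+1 := J2 (LambdaL (mxinv A)).
Definition Psi n (A : 'M[R]_n.+1) : 'M[R]_n.+1 := J2 (Phi (J2 A)).

Definition all_square_submx_invertible m n (M : 'M[R]_(m, n)) : Prop :=
  forall k (f : 'I_k -> 'I_m) (g : 'I_k -> 'I_n),
    (forall i j : 'I_k, (i < j)%N -> (f i < f j)%N) ->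
    (forall i j : 'I_k, (i < j)%N -> (g i < g j)%N) ->
    mx_invertible (mxsub f g M).

Definition in_S (M : 'M[R]_3) : Prop :=
  all_square_submx_invertible M /\ mx_invertible (J2 M).

Definition in_hatM (M : 'M[R]_3) : Prop :=
  forall i : 'I_3, M 0 i = 1 /\ M i 0 = 1.

Definition in_hatS (M : 'M[R]_3) : Prop := in_S M /\ in_hatM M.

Definition mx3 (a b c d : R) : 'M[R]_3 :=
  \matrix_(i < 3, j < 3)
    match nat_of_ord i, nat_of_ord j with
    | 1, 1 => a
    | 1, 2 => b
    | 2, 1 => c
    | 2, 2 => d
    | _, _ => 1
    end.

Definition i1 : 'I_3 := inord 1.

End Defs.

(* Psi(A)_{11} is the (1,1) entry of Lambda^L(B) for B = J_2(A)^{-1}, namely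
   B_00 B_10^{-1} B_11 B_01^{-1}.  Here J_2(A) = [[1,1,1],[1,p,q],[1,r,s]] with
   p = a^{-1}, q = c^{-1}, r = b^{-1}, s = d^{-1}.  Eliminating in the first two columns of
   J_2(A) B = 1 writes B_00 and B_11 as left multiples of B_10 and B_01, with
   pivots s - q and s - r; these are units because the 2x2 minors of A through
   c, d and through b, d have unit Schur complements d - c and d - b.  The
   corresponding rows of B J_2(A) = 1 give right inverses of B_10 and B_01, so
   both are units (x^-1 is junk for a non-unit x, so this cannot be skipped). *)

From mathcomp Require Import all_boot all_order all_algebra.
From Stdlib Require Import ClassicalEpsilon.
Import GRing.Theory.
Local Open Scope ring_scope.
Set Implicit Arguments. Unset Strict Implicit.

Section UnitRing.
Variable R : unitRingType.
Implicit Types (a b c d p q r s x y z k : R).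

Lemma unitr_of_inverses x y z : y * x = 1 -> x * z = 1 -> x \is a GRing.unit.
Proof.
move=> yx1 xz1; have yz : y = z by rewrite -[y]mulr1 -xz1 mulrA yx1 mul1r.
by apply/unitrP; exists y; rewrite {2}yz.
Qed.

Lemma subr_inv x y : x \is a GRing.unit -> y \is a GRing.unit ->
  x^-1 - y^-1 = x^-1 * (y - x) * y^-1.
Proof. by move=> Ux Uy; rewrite mulrBr mulVr // mulrBl mul1r mulrK. Qed.

Lemma unitr_subrV x y : x \is a GRing.unit -> y \is a GRing.unit ->
  x - y \is a GRing.unit -> x^-1 - y^-1 \is a GRing.unit.
Proof.
move=> Ux Uy Uxy; rewrite subr_inv // unitrMr ?unitrV // unitrMl ?unitrV //.
by rewrite -opprB unitrN.
Qed.

Lemma row_op3 k a b c a' b' c' x y z :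
  (a * x + b * y + c * z) - k * (a' * x + b' * y + c' * z)
  = (a - k * a') * x + (b - k * b') * y + (c - k * c') * z.
Proof.
by rewrite !mulrDr !mulrBl !mulrA !opprD addrACA [X in X + _]addrACA.
Qed.

Lemma mx3_solve_e0 p q r s x0 x1 x2 : s - q \is a GRing.unit ->
  1 * x0 + 1 * x1 + 1 * x2 = 1 ->
  1 * x0 + p * x1 + q * x2 = 0 ->
  1 * x0 + r * x1 + s * x2 = 0 ->
  x0 = - (p + q * (s - q)^-1 * (p - r)) * x1 /\
  (1 - p + (1 - q) * (s - q)^-1 * (p - r)) * x1 = 1.
Proof.
move=> Usq e1 e2 e3.
have e32 : (p - r) * x1 = (s - q) * x2.
  have := row_op3 1 1 r s 1 p q x0 x1 x2.
  rewrite e3 e2 mulr0 subr0 !mul1r subrr mul0r add0r => /esym/addr0_eq.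
  by rewrite -mulNr opprB.
have x2E : x2 = (s - q)^-1 * (p - r) * x1 by rewrite -mulrA e32 mulKr.
split.
  have x0E : x0 = - (p * x1 + q * x2).
    by rewrite -[x0]mul1r; apply/eqP; rewrite -addr_eq0 addrA e2.
  by rewrite x0E x2E !mulrA -mulrDl mulNr.
have := row_op3 1 1 1 1 1 p q x0 x1 x2.
rewrite e1 e2 mulr0 subr0 !mul1r subrr mul0r add0r x2E !mulrA -mulrDl.
by move/esym.
Qed.

Lemma mx3_solve_e1 p q r s z0 z1 z2 : s - r \is a GRing.unit ->
  1 * z0 + 1 * z1 + 1 * z2 = 0 ->
  1 * z0 + p * z1 + q * z2 = 1 ->
  1 * z0 + r * z1 + s * z2 = 0 ->
  z1 = (s - r)^-1 * (1 - s) * z0 /\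
  (1 - q + (p - q) * (s - r)^-1 * (1 - s)) * z0 = 1.
Proof.
move=> Usr e1 e2 e3.
have e31 : (s - r) * z1 = (1 - s) * z0.
  have := row_op3 s 1 r s 1 1 1 z0 z1 z2.
  rewrite e3 e1 mulr0 subr0 !mulr1 subrr mul0r addr0 addrC => /esym/addr0_eq.
  by rewrite -mulNr opprB.
have z1E : z1 = (s - r)^-1 * (1 - s) * z0 by rewrite -mulrA -e31 mulKr.
split=> //.
have := row_op3 q 1 p q 1 1 1 z0 z1 z2.
rewrite e2 e1 mulr0 subr0 !mulr1 subrr mul0r addr0 z1E !mulrA -mulrDl.
by move/esym.
Qed.

Lemma schur_mulr_eq1 m00 m01 m10 m11 x01 x11 : m00 \is a GRing.unit ->
  m00 * x01 + m01 * x11 = 0 -> m10 * x01 + m11 * x11 = 1 ->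
  (m11 - m10 * m00^-1 * m01) * x11 = 1.
Proof.
move=> U00 e0 e1; have x01E : x01 = - (m00^-1 * m01 * x11).
  by rewrite -mulrA -(addr0_eq e0) mulrN opprK mulKr.
by rewrite -e1 x01E mulrBl mulrN !mulrA addrC.
Qed.

Lemma invr_subrV x y : x \is a GRing.unit -> y \is a GRing.unit ->
  x - y \is a GRing.unit -> (x^-1 - y^-1)^-1 = y * (y - x)^-1 * x.
Proof.
move=> Ux Uy Uxy; have Uyx : y - x \is a GRing.unit by rewrite -opprB unitrN.
by rewrite subr_inv // !invrM ?unitrV ?unitrMl ?unitrV // !invrK mulrA.
Qed.

Lemma ratio0_invE x y c d : c \is a GRing.unit -> d \is a GRing.unit ->
  d - c \is a GRing.unit ->
  x + c^-1 * (d^-1 - c^-1)^-1 * (x - y) = (d - c)^-1 * (d * y - c * x).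
Proof.
move=> Uc Ud Udc; rewrite invr_subrV // !mulrA mulVr // mul1r -opprB invrN.
apply: (mulrI Udc); rewrite mulVKr // mulrDr !mulrA mulrN mulrV // mulN1r mulNr.
by rewrite mulrBl mulrBr opprB addrC subrKA.
Qed.

Lemma ratio1_invE b d : b \is a GRing.unit -> d \is a GRing.unit ->
  d - b \is a GRing.unit ->
  (d^-1 - b^-1)^-1 * (d^-1 - 1) = (d * b^-1 - 1)^-1 * (d - 1).
Proof.
move=> Ub Ud Udb; have -> : d * b^-1 - 1 = (d - b) * b^-1 by rewrite mulrBl mulrV.
rewrite invr_subrV // invrM ?unitrV // invrK -!mulrA mulrBr mulrV // mulr1.
by rewrite -(opprB d b) -(opprB d 1) invrN mulrNN.
Qed.
End UnitRing.

Section Matrices.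
Variable R : unitRingType.
Implicit Types (a b c d p q r s : R).

Lemma mulmx3E m n (M : 'M[R]_(m, 3)) (N : 'M[R]_(3, n)) i j :
  (M *m N) i j = M i 0 * N 0 j + M i 1 * N 1 j + M i 2 * N 2 j.
Proof.
rewrite mxE !big_ord_recl big_ord0 addr0 addrA.
by congr (_ * _ + _ * _ + _ * _); congr (_ _ _); apply: val_inj.
Qed.

Lemma mulmx2E m n (M : 'M[R]_(m, 2)) (N : 'M[R]_(2, n)) i j :
  (M *m N) i j = M i 0 * N 0 j + M i 1 * N 1 j.
Proof.
rewrite mxE !big_ord_recl big_ord0 addr0.
by congr (_ * _ + _ * _); congr (_ _ _); apply: val_inj.
Qed.

Lemma mx_invertible1_unit (M : 'M[R]_1) : mx_invertible M -> M 0 0 \is a GRing.unit.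
Proof.
move=> [X [MX XM]].
have := congr1 (fun Y : 'M[R]_1 => Y 0 0) MX.
have := congr1 (fun Y : 'M[R]_1 => Y 0 0) XM.
rewrite !mxE !big_ord1; exact: unitr_of_inverses.
Qed.

Lemma mx_invertible2_schur_unit (M : 'M[R]_2) : M 0 0 \is a GRing.unit ->
  mx_invertible M -> M 1 1 - M 1 0 * (M 0 0)^-1 * M 0 1 \is a GRing.unit.
Proof.
move=> U00 [X [MX XM]].
have MXE (i j : 'I_2) := congr1 (fun Y : 'M[R]_2 => Y i j) MX.
have XME (i j : 'I_2) := congr1 (fun Y : 'M[R]_2 => Y i j) XM.
move: (MXE 0 1) (MXE 1 1) (XME 1 0) (XME 1 1); rewrite !mulmx2E !mxE /=.
move=> e0 e1 f0 f1.
have XS : X 1 1 * (M 1 1 - M 1 0 * (M 0 0)^-1 * M 0 1) = 1.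
  by rewrite -mulrA; exact: (@schur_mulr_eq1 R^c _ _ _ _ _ _ U00 f0 f1).
exact: unitr_of_inverses XS (schur_mulr_eq1 U00 e0 e1).
Qed.

Lemma mxinvP n (M : 'M[R]_n) :
  mx_invertible M -> M *m mxinv M = 1%:M /\ mxinv M *m M = 1%:M.
Proof.
rewrite /mxinv; case: excluded_middle_informative => // inv_M _.
by case: constructive_indefinite_description.
Qed.

Lemma J2K n : involutive (@J2 R n).
Proof. by move=> M; apply/matrixP => i j; rewrite !mxE invrK. Qed.

Lemma PsiE n (A : 'M[R]_n.+1) : Psi A = LambdaL (mxinv (J2 A)).
Proof. by rewrite /Psi /Phi J2K. Qed.

Lemma J2_mx3 a b c d : J2 (mx3 a b c d) = mx3 a^-1 c^-1 b^-1 d^-1.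
Proof.
apply/matrixP => i j; rewrite !mxE.
by case: i j => [[|[|[|i]]] ?] [[|[|[|j]]] ?]; rewrite //= invr1.
Qed.

Lemma i1E : i1 = 1 :> 'I_3.
Proof. by apply: val_inj; rewrite /= inordK. Qed.

Section SquareSubmatrices.
Variables (m n : nat) (M : 'M[R]_(m, n)).
Hypothesis M_minors : all_square_submx_invertible M.

Lemma submx_entry_unit i j : M i j \is a GRing.unit.
Proof.
have lt1F (k l : 'I_1) : (k < l)%N = false by case: k l => [[]//] ? [[]//].
have inc1 t (x : 'I_t) (k l : 'I_1) : (k < l)%N -> (x < x)%N by rewrite lt1F.
by have /mx_invertible1_unit := M_minors (inc1 _ i) (inc1 _ j); rewrite mxE.
Qed.

Lemma submx_schur_unit (i i' : 'I_m) (j j' : 'I_n) : (i < i')%N -> (j < j')%N ->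
  M i' j' - M i' j * (M i j)^-1 * M i j' \is a GRing.unit.
Proof.
pose pair t (x y : 'I_t) (k : 'I_2) := if val k == 0%N then x else y.
have pair_inc t (x y : 'I_t) : (x < y)%N ->
    forall k l : 'I_2, (k < l)%N -> (pair t x y k < pair t x y l)%N.
  by move=> xy [[|[|]]//] ? [[|[|]]//].
move=> ii' jj'; have := M_minors (pair_inc _ _ _ ii') (pair_inc _ _ _ jj').
move/mx_invertible2_schur_unit; rewrite !mxE /=; apply.
exact: submx_entry_unit.
Qed.
End SquareSubmatrices.

(* The rows of [B *m N = 1] are columns of [N^T *m B^T = 1] over the converse
   ring [R^c], and the transpose of [mx3 p q r s] is [mx3 p r q s]. *)
Lemma mx3_inv_ratio0 p q r s (B : 'M[R]_3) : s - q \is a GRing.unit ->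
  mx3 p q r s *m B = 1%:M -> B *m mx3 p q r s = 1%:M ->
  B 0 0 * (B 1 0)^-1 = - (p + q * (s - q)^-1 * (p - r)).
Proof.
move=> Usq /matrixP NB /matrixP BN.
move: (NB 0 0) (NB 1 0) (NB 2 0) (BN 1 0) (BN 1 1) (BN 1 2).
rewrite !mulmx3E !mxE /= => c0 c1 c2 r0 r1 r2.
have [B00E LB10] := mx3_solve_e0 Usq c0 c1 c2.
have [_ RB10] := @mx3_solve_e1 R^c p r q s _ _ _ Usq r0 r1 r2.
by rewrite B00E mulrK // (unitr_of_inverses LB10 RB10).
Qed.

Lemma mx3_inv_ratio1 p q r s (B : 'M[R]_3) : s - r \is a GRing.unit ->
  mx3 p q r s *m B = 1%:M -> B *m mx3 p q r s = 1%:M ->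
  B 1 1 * (B 0 1)^-1 = (s - r)^-1 * (1 - s).
Proof.
move=> Usr /matrixP NB /matrixP BN.
move: (NB 0 1) (NB 1 1) (NB 2 1) (BN 0 0) (BN 0 1) (BN 0 2).
rewrite !mulmx3E !mxE /= => c0 c1 c2 r0 r1 r2.
have [B11E LB01] := mx3_solve_e1 Usr c0 c1 c2.
have [_ RB01] := @mx3_solve_e0 R^c p r q s _ _ _ Usr r0 r1 r2.
by rewrite B11E mulrK // (unitr_of_inverses LB01 RB01).
Qed.

Lemma LambdaL_inv_mx3 p q r s (B : 'M[R]_3) :
  s - q \is a GRing.unit -> s - r \is a GRing.unit ->
  mx3 p q r s *m B = 1%:M -> B *m mx3 p q r s = 1%:M ->
  LambdaL B 1 1 = (p + q * (s - q)^-1 * (p - r)) * ((s - r)^-1 * (s - 1)).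
Proof.
move=> Usq Usr NB BN; rewrite mxE -mulrA (mx3_inv_ratio0 Usq NB BN).
by rewrite (mx3_inv_ratio1 Usr NB BN) -[s - 1]opprB !mulrN mulNr.
Qed.
End Matrices.

Theorem lemma13 (R : unitRingType) (a b c d : R) :
  in_hatS (mx3 a b c d) ->
  Psi (mx3 a b c d) (i1 : 'I_3) (i1 : 'I_3)
  = (d - c)^-1 * (d * b^-1 - c * a^-1) * (d * b^-1 - 1)^-1 * (d - 1).
Proof.
move=> [[minors inv_J2A] _].
have U i j := submx_entry_unit minors i j.
have Ua : a \is a GRing.unit by have := U 1 1; rewrite mxE.
have Ub : b \is a GRing.unit by have := U 1 2; rewrite mxE.
have Uc : c \is a GRing.unit by have := U 2 1; rewrite mxE.
have Ud : d \is a GRing.unit by have := U 2 2; rewrite mxE.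
have Udc : d - c \is a GRing.unit.
  by have := submx_schur_unit minors (i := 0) (i' := 2) (j := 1) (j' := 2) isT isT;
    rewrite !mxE /= invr1 !mulr1.
have Udb : d - b \is a GRing.unit.
  by have := submx_schur_unit minors (i := 1) (i' := 2) (j := 0) (j' := 2) isT isT;
    rewrite !mxE /= invr1 !mul1r.
have [NB BN] := mxinvP inv_J2A; rewrite J2_mx3 in NB BN.
rewrite PsiE J2_mx3 i1E.
rewrite (LambdaL_inv_mx3 (unitr_subrV Ud Uc Udc) (unitr_subrV Ud Ub Udb) NB BN).
by rewrite ratio0_invE // ratio1_invE // !mulrA.
Qed.
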